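(* Let $d\ge 2$ be even. If $G$ is a $d$-regular graph, then $\alpha_{\mathrm{od}}(G)\le\frac{d-1}{2d-1}|G|$. This bound is tight: for every even $d\ge2$ and every integer $t\ge1$ there is a connected $d$-regular graph $G$ of order $n=t(2d-1)$ with $\alpha_{\mathrm{od}}(G)=\frac{d-1}{2d-1}n$; moreover, for every even $d\ge 2$ there is a $d$-regular bipartite graph attaining equality.
   Context: An odd independent set in $G=(V,E)$ is an independent set $S$ such that every $v\in V\setminus S$ has either no neighbor or an odd number of neighbors in $S$; $\alpha_{\mathrm{od}}(G)$ is its maximum size; $|G|$ is the number of vertices. *)

From mathcomp Require Import all_boot.
Set Implicit Arguments. Unset Strict Implicit. Unset Printing Implicit Defensive.

Definition simple_graph (T : finType) (e : rel T) : Prop :=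
  symmetric e /\ irreflexive e.

Definition nbhd (T : finType) (e : rel T) (v : T) : {set T} := [set u | e v u].
Definition deg (T : finType) (e : rel T) (v : T) : nat := #|nbhd e v|.

Definition regular (T : finType) (e : rel T) (d : nat) : Prop :=
  forall v : T, deg e v = d.

Definition independent (T : finType) (e : rel T) (S : {set T}) : bool :=
  [forall x in S, forall y in S, ~~ e x y].

Definition odd_independent (T : finType) (e : rel T) (S : {set T}) : bool :=
  independent e S &&
  [forall v in ~: S, (#|nbhd e v :&: S| == 0) || odd #|nbhd e v :&: S|].

(* alpha_od(G): maximum size of an odd independent set (set0 always is one). *)
Definition alpha_od (T : finType) (e : rel T) : nat :=
  \max_(S : {set T} | odd_independent e S) #|S|.

Definition connected_graph (T : finType) (e : rel T) : Prop :=
  forall x y : T, connect e x y.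

Definition bipartite (T : finType) (e : rel T) : Prop :=
  exists A : {set T}, forall x y : T, e x y -> (x \in A) != (y \in A).

From mathcomp Require Import all_boot zify.
Set Implicit Arguments. Unset Strict Implicit. Unset Printing Implicit Defensive.

(* Double counting the edges between an odd independent set S and its
   complement: every vertex of S has its d neighbours outside S, while a vertex
   outside S has 0 or an odd number of neighbours in S, hence at most d - 1 as
   d is even.  Thus d |S| <= (d - 1) (n - |S|).
   Equality holds for t blocks arranged in a cycle, each a complete bipartite
   graph K_{d-1,d} whose d-side is perfectly matched to the d-sides of the two
   neighbouring blocks: the (d-1)-sides form an odd independent set of size
   t (d - 1).  With two blocks the graph is bipartite. *)

Section OddIndependentBound.

Variables (T : finType) (e : rel T).

Lemma card_nbhdI (v : T) (B : {set T}) : #|nbhd e v :&: B| = \sum_(u in B) e v u.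
Proof.
rewrite -sum1_card big_mkcond [RHS]big_mkcond /=; apply: eq_bigr => u _.
by rewrite !inE andbC; case: (u \in B); case: (e v u).
Qed.

Lemma sum_card_nbhdI (A B : {set T}) : symmetric e ->
  \sum_(v in A) #|nbhd e v :&: B| = \sum_(u in B) #|nbhd e u :&: A|.
Proof.
move=> e_sym; under eq_bigr do rewrite card_nbhdI.
rewrite exchange_big; apply: eq_bigr => u _; rewrite card_nbhdI.
by apply: eq_bigr => v _; rewrite e_sym.
Qed.

Lemma independent_nbhdIC (S : {set T}) (v : T) :
  independent e S -> v \in S -> nbhd e v :&: ~: S = nbhd e v.
Proof.
move=> /forallP/(_ v)/implyP S_ind vS; apply/setIidPl/subsetP => u.
rewrite !inE; apply: contraL => uS.
by have /forallP/(_ u)/implyP := S_ind vS; apply.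
Qed.

Variable d : nat.
Hypotheses (e_sym : symmetric e) (e_reg : regular e d) (d_even : ~~ odd d).

Lemma odd_independent_card_nbhdI (S : {set T}) (u : T) :
  odd_independent e S -> u \notin S -> #|nbhd e u :&: S| <= d - 1.
Proof.
move=> /andP[_ /forallP/(_ u)/implyP S_odd] uS.
have le_d : #|nbhd e u :&: S| <= d.
  by rewrite -(e_reg u); apply/subset_leq_card/subsetIl.
have /orP[/eqP-> // | odd_card] :
    (#|nbhd e u :&: S| == 0) || odd #|nbhd e u :&: S|.
  by apply: S_odd; rewrite inE.
have : #|nbhd e u :&: S| != d by apply: contraTneq odd_card => ->.
lia.
Qed.

Lemma odd_independent_card_le (S : {set T}) :
  odd_independent e S -> #|S| * (2 * d - 1) <= (d - 1) * #|T|.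
Proof.
move=> S_oi; have /andP[S_ind _] := S_oi.
have edges_out : \sum_(v in S) #|nbhd e v :&: ~: S| = d * #|S|.
  rewrite mulnC -sum_nat_const; apply: eq_bigr => v vS.
  by rewrite independent_nbhdIC // -(e_reg v).
have edges_in : \sum_(u in ~: S) #|nbhd e u :&: S| <= (d - 1) * #|~: S|.
  rewrite mulnC -sum_nat_const; apply: leq_sum => u.
  by rewrite inE; apply: odd_independent_card_nbhdI.
rewrite -sum_card_nbhdI // edges_out in edges_in.
have := cardsC S; nia.
Qed.

End OddIndependentBound.

Section AlphaOd.

Variables (T : finType) (e : rel T).

Lemma odd_independent0 : odd_independent e set0.
Proof.
apply/andP; split; apply/forallP => x; apply/implyP; rewrite inE //.
by move=> _; rewrite setI0 cards0.
Qed.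

Lemma alpha_od_attained : exists2 S, odd_independent e S & alpha_od e = #|S|.
Proof.
rewrite /alpha_od (bigmax_eq_arg set0) ?odd_independent0 //.
by case: arg_maxnP => [|S S_oi _]; [exact: odd_independent0 | exists S].
Qed.

Lemma odd_independent_le_alpha_od (S : {set T}) :
  odd_independent e S -> #|S| <= alpha_od e.
Proof. exact: leq_bigmax_cond. Qed.

Lemma alpha_od_regular_le (d : nat) :
  ~~ odd d -> simple_graph e -> regular e d ->
  alpha_od e * (2 * d - 1) <= (d - 1) * #|T|.
Proof.
move=> d_even [e_sym _] e_reg; have [S S_oi ->] := alpha_od_attained.
exact: odd_independent_card_le.
Qed.

End AlphaOd.

Section Relpre.

Variables (T U : finType) (f : T -> U) (e : rel U).

Lemma nbhd_relpre (x : T) : nbhd (relpre f e) x = f @^-1: nbhd e (f x).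
Proof. by apply/setP => y; rewrite !inE. Qed.

Lemma simple_graph_relpre : simple_graph e -> simple_graph (relpre f e).
Proof.
by move=> [e_sym e_irr]; split=> [x y | x]; [apply: e_sym | apply: e_irr].
Qed.

Lemma bipartite_relpre : bipartite e -> bipartite (relpre f e).
Proof.
by move=> [A A_bip]; exists (f @^-1: A) => x y; rewrite !inE; apply: A_bip.
Qed.

Hypothesis f_bij : bijective f.

Lemma card_preimset_bij (A : {set U}) : #|f @^-1: A| = #|A|.
Proof. exact/on_card_preimset/onW_bij. Qed.

Lemma odd_independent_relpre (S : {set U}) :
  odd_independent e S -> odd_independent (relpre f e) (f @^-1: S).
Proof.
move=> /andP[/forallP S_ind /forallP S_odd]; apply/andP; split.
  apply/forallP => x; apply/implyP; rewrite inE => xS.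
  apply/forallP => y; apply/implyP; rewrite inE => yS /=.
  by have /implyP/(_ xS)/forallP/(_ (f y))/implyP/(_ yS) := S_ind (f x).
apply/forallP => v; apply/implyP; rewrite !inE => vS.
rewrite nbhd_relpre -preimsetI card_preimset_bij.
by have /implyP := S_odd (f v); rewrite inE; apply.
Qed.

Lemma regular_relpre (d : nat) : regular e d -> regular (relpre f e) d.
Proof.
by move=> e_reg x; rewrite /deg nbhd_relpre card_preimset_bij; apply: e_reg.
Qed.

Lemma connected_relpre : connected_graph e -> connected_graph (relpre f e).
Proof.
have [g fK gK] := f_bij; move=> e_conn x y.
have /connectP[p p_path y_last] := e_conn (f x) (f y).
apply/connectP; exists (map g p).
  by rewrite -path_map -map_comp (eq_map gK) map_id.
by rewrite -[x]fK last_map -y_last fK.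
Qed.

End Relpre.

Lemma val_iter_ordS n (i : 'I_n) k : val (iter k (@ordS n) i) = (i + k) %% n.
Proof.
elim: k => [|k IH] /=; first by rewrite addn0 modn_small.
by rewrite IH -addn1 modnDml addn1 addnS.
Qed.

Lemma connect_ordS (T : finType) (e : rel T) n (a : 'I_n -> T) :
  (forall i, connect e (a i) (a (ordS i))) -> forall i j, connect e (a i) (a j).
Proof.
move=> a_step i j; have -> : j = iter (j + n - i) (@ordS n) i.
  apply: val_inj; rewrite val_iter_ordS subnKC ?modnDr ?modn_small //.
  exact: leq_trans (ltnW (ltn_ord i)) (leq_addl _ _).
elim: (j + n - i) => [|k IH]; first exact: connect0.
exact: connect_trans IH (a_step _).
Qed.

Lemma odd_ordS n (i : 'I_n) : ~~ odd n -> odd (ordS i) = ~~ odd i.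
Proof. by move=> n_even; rewrite /= odd_mod ?(negbTE n_even). Qed.

Lemma odd_ord_pred n (i : 'I_n) : ~~ odd n -> odd (ord_pred i) = ~~ odd i.
Proof. by move=> n_even; rewrite -{2}[i]ord_predK odd_ordS ?negbK. Qed.

Section ExtremalGraph.

Variables t d : nat.

Definition extremal_vertex := ('I_t * 'I_(d - 1) + 'I_t * 'I_d)%type.

Definition block (v : extremal_vertex) : 'I_t :=
  match v with inl p => p.1 | inr q => q.1 end.

(* As [d] is even, [rev_ord] flips parity, so [extremal_match] is an involution
   pairing the odd outer vertices of block [i] with the even ones of block
   [i + 1]. *)
Definition extremal_match (q : 'I_t * 'I_d) : 'I_t * 'I_d :=
  (if odd q.2 then ordS q.1 else ord_pred q.1, rev_ord q.2).

Definition extremal_graph : rel extremal_vertex := fun x y =>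
  match x, y with
  | inl p, inr q | inr q, inl p => p.1 == q.1
  | inr q, inr q' => extremal_match q == q'
  | inl _, inl _ => false
  end.

Definition extremal_core : {set extremal_vertex} := [set v | is_inl v].

Lemma card_extremal_vertex : #|{: extremal_vertex}| = t * (2 * d - 1).
Proof. by rewrite card_sum !card_prod !card_ord; case: d => [|d']; lia. Qed.

Lemma card_extremal_core : #|extremal_core| = t * (d - 1).
Proof.
have -> : extremal_core = inl @: setT.
  apply/setP => -[p | q]; rewrite !inE /=; first by rewrite imset_f ?inE.
  by apply/esym/negbTE/imsetP => -[].
by rewrite card_imset ?cardsT ?card_prod ?card_ord // => p p' [].
Qed.

Lemma card_core_block (i : 'I_t) :
  #|[set (inl (i, j) : extremal_vertex) | j : 'I_(d - 1)]| = d - 1.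
Proof. by rewrite card_imset ?cardsT ?card_ord // => j j' []. Qed.

Lemma nbhd_extremal_inl (i : 'I_t) (j : 'I_(d - 1)) :
  nbhd extremal_graph (inl (i, j)) = [set inr (i, b) | b : 'I_d].
Proof.
apply/setP => -[p | [i' b]]; rewrite inE /=; first by apply/esym/imsetP => -[].
by apply/eqP/imsetP => [<- | [b' _ [-> _]]] //; exists b.
Qed.

Lemma nbhd_extremal_inr (q : 'I_t * 'I_d) :
  nbhd extremal_graph (inr q) =
  inr (extremal_match q) |: [set inl (q.1, j) | j : 'I_(d - 1)].
Proof.
apply/setP => -[[i j] | q']; rewrite !inE /=.
  by apply/eqP/imsetP => [-> | [j' _ [-> _]]] //; exists j.
rewrite (_ : _ \in _ = false) ?orbF; last by apply/negbTE/imsetP => -[].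
by apply/eqP/eqP => [<- | [->]].
Qed.

Hypothesis d_even : ~~ odd d.

Lemma odd_rev_ord (b : 'I_d) : odd (rev_ord b) = ~~ odd b.
Proof. by rewrite /= oddB ?ltn_ord // (negbTE d_even). Qed.

Lemma extremal_matchK : involutive extremal_match.
Proof.
move=> [i b]; rewrite /extremal_match /= odd_rev_ord rev_ordK.
by case: (odd b); rewrite /= ?ordSK ?ord_predK.
Qed.

Lemma extremal_match_neq (q : 'I_t * 'I_d) : extremal_match q != q.
Proof.
case: q => i b; apply/negP => /eqP [_ rev_b].
by have := odd_rev_ord b; rewrite rev_b; case: (odd b).
Qed.

Lemma extremal_simple : simple_graph extremal_graph.
Proof.
split=> [[p | q] [p' | q'] // | [p | q] //=].
  by rewrite /=; apply/eqP/eqP => <-; rewrite extremal_matchK.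
exact/negbTE/extremal_match_neq.
Qed.

Lemma extremal_regular : regular extremal_graph d.
Proof.
move=> [[i j] | q]; rewrite /deg.
  by rewrite nbhd_extremal_inl card_imset ?cardsT ?card_ord // => b b' [].
rewrite nbhd_extremal_inr cardsU1 card_core_block (_ : _ \notin _ = true).
  by rewrite add1n subn1 prednK // (leq_ltn_trans _ (ltn_ord q.2)).
by apply/imsetP => -[].
Qed.

Lemma extremal_core_odd_independent :
  odd_independent extremal_graph extremal_core.
Proof.
apply/andP; split.
  apply/forallP => -[p | q]; rewrite inE //=.
  by apply/forallP => -[p' | q']; rewrite inE.
apply/forallP => -[p | q]; rewrite !inE //=.
have -> : nbhd extremal_graph (inr q) :&: extremal_core =
          [set inl (q.1, j) | j : 'I_(d - 1)].
  rewrite nbhd_extremal_inr setIUl (_ : [set _] :&: _ = set0) ?set0U.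
    by apply/setIidPl/subsetP => v /imsetP[j _ ->]; rewrite inE.
  by apply/setP => v; rewrite !inE; case: eqP => // ->.
rewrite card_core_block oddB ?(negbTE d_even) ?orbT //.
exact: leq_ltn_trans (ltn_ord q.2).
Qed.

Lemma extremal_bipartite : ~~ odd t -> bipartite extremal_graph.
Proof.
move=> t_even; exists [set v | odd (block v) (+) is_inl v].
move=> [p | q] [p' | q'] //=; rewrite !inE /=.
- by move/eqP => ->; case: (odd _).
- by move/eqP => ->; case: (odd _).
move/eqP => <-; rewrite /extremal_match /=.
by case: (odd q.2); rewrite ?odd_ordS ?odd_ord_pred //; case: (odd _).
Qed.

Hypothesis d_gt1 : 1 < d.

Lemma extremal_connected : connected_graph extremal_graph.
Proof.
have [e_sym _] := extremal_simple.
have j0 : 'I_(d - 1) by exists 0; rewrite subn_gt0.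
pose b1 : 'I_d := Ordinal d_gt1.
pose anchor i : extremal_vertex := inr (i, b1).
have to_anchor v : connect extremal_graph v (anchor (block v)).
  case: v => [[i j] | [i b]]; first by apply: connect1 => /=.
  apply: (@connect_trans _ _ (inl (i, j0))); by apply: connect1 => /=.
have anchor_step i : connect extremal_graph (anchor i) (anchor (ordS i)).
  apply: (@connect_trans _ _ (inr (ordS i, rev_ord b1))).
    by apply: connect1; rewrite /= eqxx.
  exact: (to_anchor (inr (ordS i, rev_ord b1))).
move=> x y; apply: connect_trans (to_anchor x) _.
apply: connect_trans (connect_ordS anchor_step (block x) (block y)) _.
by rewrite (sym_connect_sym e_sym); apply: to_anchor.
Qed.

End ExtremalGraph.

Section OrdinalExtremalGraph.

Variables t d : nat.

Definition extremal_enum (i : 'I_(t * (2 * d - 1))) : extremal_vertex t d :=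
  enum_val (cast_ord (esym (card_extremal_vertex t d)) i).

Definition ord_extremal_graph : rel 'I_(t * (2 * d - 1)) :=
  relpre extremal_enum (@extremal_graph t d).

Lemma extremal_enum_bij : bijective extremal_enum.
Proof.
exists (fun v => cast_ord (card_extremal_vertex t d) (enum_rank v)) => [i | v].
  by rewrite enum_valK cast_ordKV.
by rewrite /extremal_enum cast_ordK enum_rankK.
Qed.

Hypotheses (d_gt1 : 1 < d) (d_even : ~~ odd d).

Lemma ord_extremal_simple : simple_graph ord_extremal_graph.
Proof. exact/simple_graph_relpre/extremal_simple. Qed.

Lemma ord_extremal_regular : regular ord_extremal_graph d.
Proof. exact/(regular_relpre extremal_enum_bij)/extremal_regular. Qed.

Lemma ord_extremal_connected : connected_graph ord_extremal_graph.
Proof. exact/(connected_relpre extremal_enum_bij)/extremal_connected. Qed.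

Lemma ord_extremal_bipartite : ~~ odd t -> bipartite ord_extremal_graph.
Proof. by move=> t_even; apply/bipartite_relpre/extremal_bipartite. Qed.

Lemma alpha_od_ord_extremal :
  alpha_od ord_extremal_graph * (2 * d - 1) = (d - 1) * (t * (2 * d - 1)).
Proof.
have alpha_le :=
  alpha_od_regular_le d_even ord_extremal_simple ord_extremal_regular.
have core_oi := extremal_core_odd_independent t d_even.
have core_le := odd_independent_le_alpha_od
  (odd_independent_relpre extremal_enum_bij core_oi).
rewrite card_ord in alpha_le.
rewrite (card_preimset_bij extremal_enum_bij) card_extremal_core in core_le.
by apply/eqP; rewrite eqn_leq alpha_le mulnCA mulnA leq_mul2r core_le orbT.
Qed.

End OrdinalExtremalGraph.

Theorem proposition3 (d : nat) (d_ge2 : 2 <= d) (d_even : ~~ odd d) :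
  (forall (T : finType) (e : rel T),
      simple_graph e -> regular e d ->
      alpha_od e * (2 * d - 1) <= (d - 1) * #|T|)
  /\
  (forall t : nat, 1 <= t ->
     exists e : rel 'I_(t * (2 * d - 1)),
       [/\ simple_graph e, regular e d, connected_graph e &
           alpha_od e * (2 * d - 1) = (d - 1) * (t * (2 * d - 1))])
  /\
  (exists n : nat, 0 < n /\
     exists e : rel 'I_n,
       [/\ simple_graph e, regular e d, bipartite e &
           alpha_od e * (2 * d - 1) = (d - 1) * n]).
Proof.
split; first by move=> T e; apply: alpha_od_regular_le.
split=> [t _ | ].
  exists (@ord_extremal_graph t d); split.
  - exact: ord_extremal_simple.
  - exact: ord_extremal_regular.
  - exact: ord_extremal_connected.
  - exact: alpha_od_ord_extremal.
exists (2 * (2 * d - 1)); split; first lia.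
exists (@ord_extremal_graph 2 d); split.
- exact: ord_extremal_simple.
- exact: ord_extremal_regular.
- exact: ord_extremal_bipartite.
- exact: alpha_od_ord_extremal.
Qed.
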